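(* Consider an RB instance satisfying Assumption 2 in which $P(s,a,s')>0$ for all $s,s'\in\mathbb S$, $a\in\{0,1\}$. Then there exist constants $\eta'>0$ and $K_{\mathrm{noise}}>0$ such that for all sufficiently large $N$, every time $t$, every system state with $\|X_t([N])-\mu^*\|_1\le\eta'$ (for which Optimal Local Control applied to all $N$ arms is defined), and every $\xi\in\mathbb R^{\mathbb S}$ with $\|\xi\|_2=1$ and $\mu^*\xi^\top=0$: if $\mathbf A_t$ is chosen by Optimal Local Control applied to all $N$ arms, then $$\mathbb E\Big[\big|\big(X_{t+1}([N])-\mu^*-(X_t([N])-\mu^* )\Phi\big)\xi^\top\big|\,\Big|\,X_t,\mathbf A_t\Big]\ge\frac{K_{\mathrm{noise}}}{\sqrt N}.$$
   Context: Single-armed MDP $(\mathbb S,\{0,1\},P,r)$, finite $\mathbb S$, budget $\alpha\in(0,1)$; $N$ arms transition independently by $P$ given states and actions. $X_t([N],s)=\frac1N\#\{i:S_t(i)=s\}$ (row vector $X_t([N])$). LP relaxation: maximize $\sum r(s,a)y(s,a)$ over $y\ge0$ s.t. $\sum_sy(s,1)=\alpha$, $\sum_{s',a}y(s',a)P(s',a,s)=\sum_ay(s,a)$ for all $s$, $\sum y=1$; $y^*$ a fixed optimal solution. $\bar\pi^*(a|s)=y^*(s,a)/(y^*(s,0)+y^*(s,1))$ if denominator $>0$, else $1/2$; $P_{\bar\pi^*}(s,s')=\sum_a\bar\pi^*(a|s)P(s,a,s')$; $\mu^*(s)=y^*(s,0)+y^*(s,1)$. Assumption 2: unique $\tilde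 s$ with $y^*(\tilde s,0),y^*(\tilde s,1)>0$. $\Phi=P_{\bar\pi^*}-\mathbf 1^\top\mu^*-(c-\alpha\mathbf 1)^\top(P_1(\tilde s)-P_0(\tilde s))$, $c=(\bar\pi^*(1|s))_s$, $P_a(\tilde s)=(P(\tilde s,a,s))_s$, $\mathbf 1$ all-ones row vector. $S^+,S^-,S^\emptyset$: states with ($y^*(s,1)>0=y^*(s,0)$), ($y^*(s,1)=0<y^*(s,0)$), ($y^*(s,1)=y^*(s,0)=0$). Randomized rounding of $c\ge0$: $\lceil c\rceil$ w.p. $c-\lfloor c\rfloor$, else $\lfloor c\rfloor$. Optimal Local Control applied to all $N$ arms with $z(s)$ arms in state $s$, defined when $\sum_{s\neq\tilde s}\bar\pi^*(1|s)z(s)\le\alpha N-|S^\emptyset|-1$ and $\sum_{s\neq\tilde s}\bar\pi^*(0|s)z(s)\le(1-\alpha)N-|S^\emptyset|-1$: let $B$ be a randomized rounding of $\alpha N$; activate all arms in $S^+$, none in $S^-$, a randomized rounding of $z(s)/2$ arms in each $s\in S^\emptyset$, and arms in $\tilde s$ so that exactly $B$ are active. *)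

From HB Require Import structures.
From mathcomp Require Import all_boot all_order all_algebra.
From mathcomp Require Export reals.
Set Implicit Arguments. Unset Strict Implicit. Unset Printing Implicit Defensive.
Import Order.TTheory GRing.Theory Num.Theory.
Local Open Scope ring_scope.

Section RB.
Variables (R : realType) (S : finType).
(* actions: false = 0 (passive), true = 1 (active) *)
Implicit Types (P : S -> bool -> S -> R) (y : S -> bool -> R).

Definition is_stochastic P :=
  forall s a, (forall s', 0 <= P s a s') /\ \sum_(s' : S) P s a s' = 1.

Definition lp_objective (r : S -> bool -> R) y :=
  \sum_(s : S) \sum_(a : bool) r s a * y s a.

Definition lp_feasible P (alpha : R) y :=
  [/\ (forall s a, 0 <= y s a),
      \sum_(s : S) y s true = alpha,
      (forall s, \sum_(s' : S) \sum_(a : bool) y s' a * P s' a s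
                 = \sum_(a : bool) y s a)
    & \sum_(s : S) \sum_(a : bool) y s a = 1].

Definition lp_optimal P (r : S -> bool -> R) alpha y :=
  lp_feasible P alpha y /\
  forall y', lp_feasible P alpha y' -> lp_objective r y' <= lp_objective r y.

Definition mu_star y (s : S) : R := y s false + y s true.

Definition pi_bar y (a : bool) (s : S) : R :=
  if 0 < mu_star y s then y s a / mu_star y s else 1 / 2.

Definition P_pi P y (s s' : S) : R := \sum_(a : bool) pi_bar y a s * P s a s'.

Definition assumption2 y (st : S) :=
  (0 < y st false /\ 0 < y st true) /\
  forall s, 0 < y s false -> 0 < y s true -> s = st.

Definition Phi P y (alpha : R) (st : S) (s s' : S) : R :=
  P_pi P y s s' - mu_star y s'
  - (pi_bar y true s - alpha) * (P st true s' - P st false s').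

Definition S_plus y : pred S := fun s => (0 < y s true) && (y s false == 0).
Definition S_minus y : pred S := fun s => (y s true == 0) && (0 < y s false).
Definition S_empty y : pred S := fun s => (y s true == 0) && (y s false == 0).

Definition cnt N (x : {ffun 'I_N -> S}) (s : S) : nat := #|[set i | x i == s]|.

Definition emp N (x : {ffun 'I_N -> S}) (s : S) : R := (cnt x s)%:R / N%:R.

Definition l1dist (u v : S -> R) : R := \sum_(s : S) `|u s - v s|.

Definition olc_defined y (alpha : R) (st : S) N (x : {ffun 'I_N -> S}) :=
  \sum_(s : S | s != st) pi_bar y true s * (cnt x s)%:R
     <= alpha * N%:R - #|S_empty y|%:R - 1 /\
  \sum_(s : S | s != st) pi_bar y false s * (cnt x s)%:R
     <= (1 - alpha) * N%:R - #|S_empty y|%:R - 1.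

(* k is in the support of a randomized rounding of c >= 0
   (k = floor c or ceil c, each reached with positive probability) *)
Definition rround_support (c : R) (k : nat) : Prop := `|k%:R - c| < 1.

(* a is an action vector that Optimal Local Control (applied to all N arms in
   system state x) selects with positive probability. *)
Definition olc_action y (alpha : R) N (x : {ffun 'I_N -> S})
    (a : {ffun 'I_N -> bool}) :=
  [/\ rround_support (alpha * N%:R) #|[set i | a i]|,
      (forall i, S_plus y (x i) -> a i = true),
      (forall i, S_minus y (x i) -> a i = false)
    & (forall s, S_empty y s ->
         rround_support ((cnt x s)%:R / 2) #|[set i | (x i == s) && a i]|)].

Definition next_prob P N (x : {ffun 'I_N -> S}) (a : {ffun 'I_N -> bool})
    (nxt : {ffun 'I_N -> S}) : R :=
  \prod_(i : 'I_N) P (x i) (a i) (nxt i).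

Definition noise_term P y alpha st N (x nxt : {ffun 'I_N -> S}) (xi : S -> R) : R :=
  \sum_(s' : S) (emp nxt s' - mu_star y s') * xi s'
  - \sum_(s' : S) (\sum_(s : S) (emp x s - mu_star y s) * Phi P y alpha st s s') * xi s'.

Definition cond_exp_abs_noise P y alpha st N (x : {ffun 'I_N -> S})
    (a : {ffun 'I_N -> bool}) (xi : S -> R) : R :=
  \sum_(nxt : {ffun 'I_N -> S})
     next_prob P x a nxt * `|noise_term P y alpha st x nxt xi|.

End RB.

(* Given the current state and actions, the arms move independently, arm i to a state drawn
   from P(x_i, a_i, .), so the noise term equals (1/N) (\sum_i xi(S_i) - c) for a constant c.
   Because all transition probabilities are at least some p > 0 and the unit vector xi is
   orthogonal to the distribution mu*, xi cannot be almost constant: each xi(S_i) has variance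
   at least k > 0.  For Y = \sum_i xi(S_i) - c this gives E Y^2 >= k N + d^2 and
   E Y^4 <= 384 (N + d^2)^2 (d = E Y), and the pointwise inequality
   t^2 x^2 <= t^3 |x| + x^4, averaged with t ~ sqrt (N + d^2), turns these moment bounds into
   E |Y| >= (k^2 / 1536) sqrt N. *)

From HB Require Import structures.
From mathcomp Require Import all_boot all_order all_algebra.
From mathcomp Require Import reals.
From mathcomp Require Import ring lra.

Set Implicit Arguments.
Unset Strict Implicit.
Unset Printing Implicit Defensive.

Import Order.TTheory GRing.Theory Num.Theory.
Local Open Scope ring_scope.

Lemma expr4D_le (R : realFieldType) (a b : R) :
  (a + b) ^+ 4 <= 8 * a ^+ 4 + 8 * b ^+ 4.
Proof.
have sqrD : (a + b) ^+ 2 <= 2 * (a ^+ 2 + b ^+ 2) by have := sqr_ge0 (a - b); nra.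
have := sqr_ge0 (a ^+ 2 - b ^+ 2); have := sqr_ge0 (a + b).
rewrite (_ : (a + b) ^+ 4 = ((a + b) ^+ 2) ^+ 2) -?exprM //; nra.
Qed.

Lemma sqr_mul_sqr_le (R : realFieldType) (t x : R) :
  0 <= t -> t ^+ 2 * x ^+ 2 <= t ^+ 3 * `|x| + x ^+ 4.
Proof.
move=> t_ge0; rewrite -[x ^+ 2]real_normK ?num_real //.
rewrite (_ : x ^+ 4 = (`|x| ^+ 2) ^+ 2); last by rewrite real_normK ?num_real // -exprM.
have := normr_ge0 x; case: (leP `|x| t) => [le_xt|lt_tx] x_ge0.
- have : 0 <= `|x| ^+ 4 by rewrite exprn_ge0.
  have : `|x| * `|x| <= t * `|x| by rewrite ler_wpM2r.
  nra.
- have : t ^+ 2 * `|x| ^+ 2 <= `|x| ^+ 2 * `|x| ^+ 2.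
    by rewrite ler_wpM2r ?sqr_ge0 // ler_sqr ?ltW.
  have : 0 <= t ^+ 3 * `|x| by rewrite mulr_ge0 ?exprn_ge0.
  rewrite -expr2; lra.
Qed.

Lemma first_moment_lb (R : realFieldType) (k C r A B m : R) :
  0 < k -> k <= 2 * C -> 0 < r -> k * r ^+ 2 <= A -> B <= C * r ^+ 4 ->
  (forall t, 0 <= t -> t ^+ 2 * A <= t ^+ 3 * m + B) ->
  k ^+ 2 / (4 * C) * r <= m.
Proof.
move=> k_gt0 kC r_gt0 kA BC holder.
have C_gt0 : 0 < C by lra.
have [T Tk T_ge1] : exists2 T, T * k = 2 * C & 1 <= T.
  by exists (2 * C / k); rewrite ?mulfVK ?gt_eqF // ler_pdivlMr // mul1r.
have T_gt0 : 0 < T by apply: lt_le_trans T_ge1.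
have := holder (T * r) (mulr_ge0 (ltW T_gt0) (ltW r_gt0)).
rewrite !exprMn => ineq.
have CTr4_le : C * T * r ^+ 4 <= T ^+ 3 * r ^+ 3 * m.
  have hA : T ^+ 2 * r ^+ 2 * (k * r ^+ 2) <= T ^+ 2 * r ^+ 2 * A.
    by rewrite ler_wpM2l // mulr_ge0 // exprn_ge0 // ltW.
  have hA_eq : T ^+ 2 * r ^+ 2 * (k * r ^+ 2) = 2 * C * T * r ^+ 4.
    by rewrite -Tk; ring.
  have : C * r ^+ 4 <= C * T * r ^+ 4.
    by rewrite -mulrA ler_pM2l // ler_peMl ?exprn_ge0 // ltW.
  lra.
have Tr3_gt0 : 0 < T * r ^+ 3 by rewrite mulr_gt0 ?exprn_gt0.
have : C * r * (T * r ^+ 3) <= T ^+ 2 * m * (T * r ^+ 3).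
  by rewrite (_ : C * r * _ = C * T * r ^+ 4) 1?(_ : _ * m * _ = T ^+ 3 * r ^+ 3 * m) //; ring.
have -> : k ^+ 2 / (4 * C) = C / T ^+ 2.
  have -> : T = 2 * C / k by rewrite -Tk mulfK ?gt_eqF.
  by field; rewrite ?pnatr_eq0 ?gt_eqF.
rewrite ler_pM2r // => CrTm.
by rewrite mulrAC ler_pdivrMr ?exprn_gt0 // [m * _]mulrC.
Qed.

Lemma pos_fun_lb (R : realFieldType) (T : finType) (F : T -> R) :
  (forall t, 0 < F t) -> exists p, [/\ 0 < p, p <= 1 & forall t, p <= F t].
Proof.
move=> F_gt0; set Z := \sum_t (F t)^-1.
have Z_ge0 : 0 <= Z by apply: sumr_ge0 => t _; rewrite invr_ge0 ltW.
exists (1 + Z)^-1; split; first by rewrite invr_gt0; lra.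
  by rewrite invf_le1; lra.
move=> t; have FtZ : (F t)^-1 <= Z.
  by rewrite /Z (bigD1 t) //= lerDl; apply: sumr_ge0 => i _; rewrite invr_ge0 ltW.
rewrite -[F t]invrK lef_pV2 ?posrE ?invr_gt0 //; lra.
Qed.

(* If |t| is large, the mu-average of (g - t)^2 is already >= t^2 (as g is mu-centered);
   otherwise g is close to the constant t, contradicting \sum g^2 = 1. *)
Lemma sum_sqr_subr_ge (R : realFieldType) (S : finType) (mu g : S -> R) (t : R) :
  (forall s, 0 <= mu s) -> \sum_s mu s = 1 ->
  \sum_s mu s * g s = 0 -> \sum_s g s ^+ 2 = 1 ->
  1 / (2 * (#|S|%:R + 1)) <= \sum_s (g s - t) ^+ 2.
Proof.
move=> mu_ge0 mu_sum1 mu_g g_unit; set Q := \sum_s (g s - t) ^+ 2.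
have mu_le1 s : mu s <= 1.
  by rewrite -mu_sum1 (bigD1 s) //= lerDl; apply: sumr_ge0.
have mu_var : \sum_s mu s * (g s - t) ^+ 2 = \sum_s mu s * g s ^+ 2 + t ^+ 2.
  transitivity (\sum_s mu s * g s ^+ 2 - 2 * t * \sum_s mu s * g s
                + t ^+ 2 * \sum_s mu s).
    by rewrite !mulr_sumr -sumrB -big_split; apply: eq_bigr => s _ /=; ring.
  by rewrite mu_g mu_sum1; ring.
have tQ : t ^+ 2 <= Q.
  apply: (@le_trans _ _ (\sum_s mu s * (g s - t) ^+ 2)).
    by rewrite mu_var lerDr; apply: sumr_ge0 => s _; rewrite mulr_ge0 ?sqr_ge0.
  by apply: ler_sum => s _; rewrite ler_piMl ?sqr_ge0.
have nQ : 1 / 2 - #|S|%:R * t ^+ 2 <= Q.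
  apply: (@le_trans _ _ (\sum_s (g s ^+ 2 / 2 - t ^+ 2))).
    by rewrite sumrB -mulr_suml g_unit sumr_const mulr_natl mul1r; lra.
  by apply: ler_sum => s _; have := sqr_ge0 (g s - 2 * t); nra.
have n_ge0 : 0 <= #|S|%:R :> R by [].
have : #|S|%:R * t ^+ 2 <= #|S|%:R * Q by apply: ler_wpM2l.
rewrite ler_pdivrMr; nra.
Qed.

Lemma weighted_sum_sqr_subr_ge (R : realFieldType) (S : finType) (mu w g : S -> R)
    (p t : R) :
  (forall s, 0 <= mu s) -> \sum_s mu s = 1 ->
  \sum_s mu s * g s = 0 -> \sum_s g s ^+ 2 = 1 ->
  0 <= p -> (forall s, p <= w s) ->
  p / (2 * (#|S|%:R + 1)) <= \sum_s w s * (g s - t) ^+ 2.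
Proof.
move=> mu_ge0 mu_sum1 mu_g g_unit p_ge0 p_le_w.
apply: (@le_trans _ _ (p * \sum_s (g s - t) ^+ 2)).
  rewrite -[p in p / _]mulr1 -mulrA ler_wpM2l //.
  exact: sum_sqr_subr_ge mu_ge0 mu_sum1 mu_g g_unit.
by rewrite mulr_sumr; apply: ler_sum => s _; rewrite ler_wpM2r ?sqr_ge0.
Qed.

Lemma unit_coord_le1 (R : realFieldType) (S : finType) (xi : S -> R) :
  \sum_s xi s ^+ 2 = 1 -> forall s, `|xi s| <= 1.
Proof.
move=> xi_sqr s; have xs_le1 : `|xi s| ^+ 2 <= 1.
  by rewrite real_normK ?num_real // -xi_sqr (bigD1 s) //= lerDl sumr_ge0 // => j _; rewrite sqr_ge0.
by rewrite -(expr_le1 (_ : 0 < 2)%N) ?normr_ge0.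
Qed.

Lemma divr_sqrt (R : rcfType) (x a : R) : 0 < a -> x / Num.sqrt a = a^-1 * (x * Num.sqrt a).
Proof.
move=> a_gt0; rewrite -[in a^-1](@sqr_sqrtr _ a) ?ltW //.
by field; rewrite gt_eqF ?sqrtr_gt0.
Qed.

Lemma sumr_delta (R : pzSemiRingType) (T : finType) (i : T) (F : T -> R) :
  \sum_j (i == j)%:R * F j = F i.
Proof.
rewrite (bigD1 i) //= eqxx mul1r big1 ?addr0 // => j /negbTE.
by rewrite eq_sym => ->; rewrite mul0r.
Qed.

Lemma sum_pairings (R : comPzSemiRingType) (T : finType) :
  \sum_(i : T) \sum_(j : T) \sum_(k : T) \sum_(l : T)
    ((i == j)%:R * (k == l)%:R + (i == k)%:R * (j == l)%:R + (i == l)%:R * (j == k)%:R)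
  = 3 * #|T|%:R ^+ 2 :> R.
Proof.
have delta1 (i : T) : \sum_j (i == j)%:R = 1 :> R.
  by rewrite -[RHS](@sumr_delta R _ i (fun=> 1)); apply: eq_bigr => j _; rewrite mulr1.
have sum_l (i j k : T) : \sum_l ((i == j)%:R * (k == l)%:R + (i == k)%:R * (j == l)%:R
    + (i == l)%:R * (j == k)%:R) = (i == j)%:R + (i == k)%:R + (j == k)%:R :> R.
  by rewrite !big_split -!mulr_sumr -mulr_suml !delta1 !mulr1 mul1r.
under eq_bigr => i _ do under eq_bigr => j _ do under eq_bigr => k _ do rewrite sum_l.
under eq_bigr => i _ do under eq_bigr => j _ do
  rewrite !big_split /= !delta1 sumr_const.
under eq_bigr do rewrite !big_split /= sumrMnl delta1 !sumr_const.
rewrite sumr_const -[#|xpredT|]/#|T|.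
by rewrite -mulr_natr; ring.
Qed.

Lemma four_paired_or_single (T : eqType) (i j k l : T) :
  [|| (i == j) && (k == l), (i == k) && (j == l), (i == l) && (j == k)
    | has (fun n => count_mem n [:: i; j; k; l] == 1%N) [:: i; j; k; l]].
Proof. by rewrite /=; do ![case: (@eqP T) => //= ?; subst; rewrite ?eqxx /=]. Qed.

Lemma expr4_sumr (R : pzSemiRingType) (I : finType) (a : I -> R) :
  (\sum_i a i) ^+ 4 = \sum_i \sum_j \sum_k \sum_l a i * a j * a k * a l.
Proof.
rewrite 3!exprS expr1 mulr_suml; apply: eq_bigr => i _.
rewrite mulr_suml mulr_sumr; apply: eq_bigr => j _.
rewrite mulr_suml !mulr_sumr; apply: eq_bigr => k _.
by rewrite !mulr_sumr; apply: eq_bigr => l _; rewrite !mulrA.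
Qed.

Section ProductExpectation.
Variables (R : realFieldType) (S : finType) (N : nat) (q : 'I_N -> S -> R).
Hypothesis q_ge0 : forall i s, 0 <= q i s.
Hypothesis q_sum1 : forall i, \sum_s q i s = 1.

Definition expect (F : {ffun 'I_N -> S} -> R) :=
  \sum_(f : {ffun 'I_N -> S}) (\prod_i q i (f i)) * F f.

Lemma eq_expect F G : (forall f, F f = G f) -> expect F = expect G.
Proof. by move=> FG; apply: eq_bigr => f _; rewrite FG. Qed.

Lemma expect_prod (H : 'I_N -> S -> R) :
  expect (fun f => \prod_i H i (f i)) = \prod_i \sum_s q i s * H i s.
Proof. by rewrite bigA_distr_bigA; apply: eq_bigr => f _; rewrite -big_split. Qed.

Lemma expectD F G : expect (fun f => F f + G f) = expect F + expect G.
Proof. by rewrite /expect -big_split; apply: eq_bigr => f _; rewrite mulrDr. Qed.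

Lemma expectZ c F : expect (fun f => c * F f) = c * expect F.
Proof. by rewrite /expect mulr_sumr; apply: eq_bigr => f _; rewrite mulrCA. Qed.

Lemma expect_sum (I : finType) (F : I -> {ffun 'I_N -> S} -> R) :
  expect (fun f => \sum_i F i f) = \sum_i expect (F i).
Proof. by rewrite /expect exchange_big; apply: eq_bigr => f _; rewrite mulr_sumr. Qed.

Lemma expect_cst c : expect (fun _ => c) = c.
Proof.
have expect1 : expect (fun _ => 1) = 1.
  transitivity (expect (fun f => \prod_i (fun _ _ => 1) i (f i))).
    by apply: eq_expect => f; rewrite big1_eq.
  rewrite (expect_prod (fun _ _ => 1)) big1 // => i _.
  by under eq_bigr do rewrite mulr1; apply: q_sum1.
by rewrite -[in RHS](mulr1 c) -expect1 -expectZ; apply: eq_expect => f; rewrite mulr1.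
Qed.

Lemma ler_expect F G : (forall f, F f <= G f) -> expect F <= expect G.
Proof.
by move=> FG; apply: ler_sum => f _; rewrite ler_wpM2l ?prodr_ge0.
Qed.

Lemma ler_norm_expect F c : (forall f, `|F f| <= c) -> `|expect F| <= c.
Proof.
move=> Fc; apply: le_trans (ler_norm_sum _ _ _) _; rewrite -[c]expect_cst.
have w_ge0 f : 0 <= \prod_i q i (f i) by apply: prodr_ge0 => i _; apply: q_ge0.
by apply: ler_sum => f _; rewrite normrM ger0_norm // ler_wpM2l.
Qed.

Section CenteredMoments.
Variables (u : 'I_N -> S -> R) (b : R).
Hypothesis u_mean0 : forall i, \sum_s q i s * u i s = 0.
Hypothesis u_bound : forall i s, `|u i s| <= b.

Definition uprod (ls : seq 'I_N) (f : {ffun 'I_N -> S}) := \prod_(i <- ls) u i (f i).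

Lemma expect_uprod ls :
  expect (uprod ls) = \prod_n \sum_s q n s * u n s ^+ count_mem n ls.
Proof.
rewrite -(expect_prod (fun n s => u n s ^+ count_mem n ls)).
apply: eq_expect => f; rewrite /uprod; elim: ls => [|i ls IH].
  by rewrite big_nil; apply/esym/big1 => n _; rewrite expr0.
rewrite big_cons IH /=.
under [RHS]eq_bigr do rewrite exprD.
rewrite big_split /=; congr (_ * _).
rewrite (bigD1 i) //= eqxx expr1 big1 ?mulr1 // => n /negbTE.
by rewrite eq_sym => ->; rewrite expr0.
Qed.

(* A coordinate occurring exactly once contributes its (zero) mean as a factor. *)
Lemma expect_uprod_single ls n : count_mem n ls = 1%N -> expect (uprod ls) = 0.
Proof.
move=> n1; rewrite expect_uprod (bigD1 n) //= n1.
by under eq_bigr do rewrite expr1; rewrite u_mean0 mul0r.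
Qed.

Lemma expect_u i : expect (fun f => u i (f i)) = 0.
Proof.
transitivity (expect (uprod [:: i])).
  by apply: eq_expect => f; rewrite /uprod big_seq1.
by apply: (@expect_uprod_single _ i); rewrite /= eqxx.
Qed.

Lemma expect_uu i j :
  expect (fun f => u i (f i) * u j (f j)) = (i == j)%:R * \sum_s q i s * u i s ^+ 2.
Proof.
have -> : expect (fun f => u i (f i) * u j (f j)) = expect (uprod [:: i; j]).
  by apply: eq_expect => f; rewrite /uprod big_cons big_seq1.
have [<-|neq_ij] := eqVneq i j; last first.
  by rewrite mul0r (@expect_uprod_single _ i) //= eqxx eq_sym (negbTE neq_ij).
rewrite mul1r expect_uprod (bigD1 i) //= eqxx [X in _ * X]big1 ?mulr1 // => n /negbTE.
by rewrite eq_sym => -> /=; under eq_bigr do rewrite expr0 mulr1; apply: q_sum1.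
Qed.

Lemma norm_uprod ls f : `|uprod ls f| <= b ^+ size ls.
Proof.
elim: ls => [|i ls IH]; first by rewrite /uprod big_nil normr1.
by rewrite /uprod big_cons normrM exprS ler_pM.
Qed.

Lemma expect_u4_le i j k l :
  expect (fun f => u i (f i) * u j (f j) * u k (f k) * u l (f l)) <=
  b ^+ 4 * ((i == j)%:R * (k == l)%:R + (i == k)%:R * (j == l)%:R
            + (i == l)%:R * (j == k)%:R).
Proof.
have -> : expect (fun f => u i (f i) * u j (f j) * u k (f k) * u l (f l))
          = expect (uprod [:: i; j; k; l]).
  by apply: eq_expect => f; rewrite /uprod !big_cons big_nil mulr1 !mulrA.
set pairs := _ + _ + _.
have pairs_ge0 : 0 <= pairs by rewrite !addr_ge0 ?mulr_ge0.
have [paired|] := boolP [|| (i == j) && (k == l), (i == k) && (j == l) | (i == l) && (j == k)].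
  have one_le_pairs : 1 <= pairs.
    rewrite /pairs; case/or3P: paired => /andP[/eqP-> /eqP->]; rewrite !eqxx mul1r.
    - by rewrite -addrA lerDl addr_ge0 ?mulr_ge0.
    - by rewrite addrAC lerDr addr_ge0 ?mulr_ge0.
    - by rewrite lerDr addr_ge0 ?mulr_ge0.
  apply: le_trans (real_ler_norm (num_real _)) _.
  apply: le_trans (ler_norm_expect (norm_uprod _)) _.
  by rewrite ler_peMr ?exprn_even_ge0.
move=> not_paired.
case/or4P: (four_paired_or_single i j k l) => [p|p|p|/hasP[n _ /eqP n_single]];
  try by rewrite p ?orbT in not_paired.
by rewrite (expect_uprod_single n_single) mulr_ge0 ?exprn_even_ge0.
Qed.

Definition centered_sum (f : {ffun 'I_N -> S}) := \sum_i u i (f i).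

Lemma expect_centered_sum : expect centered_sum = 0.
Proof. by rewrite expect_sum big1 // => i _; apply: expect_u. Qed.

Lemma expect_centered_sum_sqr :
  expect (fun f => centered_sum f ^+ 2) = \sum_i \sum_s q i s * u i s ^+ 2.
Proof.
transitivity (expect (fun f => \sum_i \sum_j u i (f i) * u j (f j))).
  by apply: eq_expect => f; rewrite expr2 mulr_suml; apply: eq_bigr => i _; rewrite mulr_sumr.
rewrite expect_sum; apply: eq_bigr => i _.
by rewrite expect_sum; under eq_bigr do rewrite expect_uu; rewrite sumr_delta.
Qed.

Lemma expect_centered_sum_quartic_le :
  expect (fun f => centered_sum f ^+ 4) <= 3 * b ^+ 4 * N%:R ^+ 2.
Proof.
rewrite (eq_expect (fun f => expr4_sumr (fun i => u i (f i)))).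
have -> : 3 * b ^+ 4 * N%:R ^+ 2 = b ^+ 4 * (3 * #|'I_N|%:R ^+ 2) by rewrite card_ord; ring.
rewrite -sum_pairings mulr_sumr expect_sum; apply: ler_sum => i _.
rewrite mulr_sumr expect_sum; apply: ler_sum => j _.
rewrite mulr_sumr expect_sum; apply: ler_sum => k _.
by rewrite mulr_sumr expect_sum; apply: ler_sum => l _; apply: expect_u4_le.
Qed.

Lemma expect_centered_sum_shift_sqr d :
  expect (fun f => (centered_sum f + d) ^+ 2) = \sum_i \sum_s q i s * u i s ^+ 2 + d ^+ 2.
Proof.
transitivity (expect (fun f => centered_sum f ^+ 2 + (2 * d * centered_sum f + d ^+ 2))).
  by apply: eq_expect => f; ring.
by rewrite !expectD expectZ expect_cst expect_centered_sum mulr0 add0r expect_centered_sum_sqr.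
Qed.

Lemma expect_centered_sum_shift_quartic_le d :
  expect (fun f => (centered_sum f + d) ^+ 4) <= 24 * b ^+ 4 * N%:R ^+ 2 + 8 * d ^+ 4.
Proof.
apply: (@le_trans _ _ (expect (fun f => 8 * centered_sum f ^+ 4 + 8 * d ^+ 4))).
  by apply: ler_expect => f; apply: expr4D_le.
rewrite expectD expectZ expect_cst lerD2r.
by have := expect_centered_sum_quartic_le; lra.
Qed.

End CenteredMoments.
End ProductExpectation.

Section AntiConcentration.
Variables (R : rcfType) (S : finType) (N : nat) (q : 'I_N -> S -> R).
Hypothesis q_ge0 : forall i s, 0 <= q i s.
Hypothesis q_sum1 : forall i, \sum_s q i s = 1.
Variable k : R.
Hypotheses (k_gt0 : 0 < k) (k_le1 : k <= 1).

Lemma expect_abs_centered_sum_ge (u : 'I_N -> S -> R) d :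
  (forall i, \sum_s q i s * u i s = 0) -> (forall i s, `|u i s| <= 2) ->
  (forall i, k <= \sum_s q i s * u i s ^+ 2) -> (0 < N)%N ->
  k ^+ 2 / 1536 * Num.sqrt N%:R <= expect q (fun f => `|centered_sum u f + d|).
Proof.
move=> u_mean0 u_bound var_lb N_gt0.
set EY := expect q _.
set A := expect q (fun f => (centered_sum u f + d) ^+ 2).
set B := expect q (fun f => (centered_sum u f + d) ^+ 4).
have A_ge : k * N%:R + d ^+ 2 <= A.
  rewrite /A expect_centered_sum_shift_sqr // lerD2r.
  apply: (@le_trans _ _ (\sum_(i < N) k)); first by rewrite sumr_const card_ord mulr_natr.
  by apply: ler_sum => i _; apply: var_lb.
have B_le : B <= 384 * (N%:R + d ^+ 2) ^+ 2.
  apply: le_trans (expect_centered_sum_shift_quartic_le q_ge0 q_sum1 u_mean0 u_bound d) _.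
  have := mulr_ge0 (ler0n R N) (sqr_ge0 d); have := sqr_ge0 (d ^+ 2).
  rewrite (_ : d ^+ 4 = (d ^+ 2) ^+ 2) -?exprM //; nra.
have holder t : 0 <= t -> t ^+ 2 * A <= t ^+ 3 * EY + B.
  move=> t_ge0; rewrite -expectZ -expectZ -expectD //.
  by apply: ler_expect => // f; apply: sqr_mul_sqr_le.
have s_gt0 : 0 < N%:R + d ^+ 2 by rewrite ltr_pwDl ?sqr_ge0 ?ltr0n.
have [r [r_gt0 r_sqr sqrtN_le_r]] :
    exists r : R, [/\ 0 < r, r ^+ 2 = N%:R + d ^+ 2 & Num.sqrt N%:R <= r].
  exists (Num.sqrt (N%:R + d ^+ 2)); split.
  - by rewrite sqrtr_gt0.
  - by rewrite sqr_sqrtr // ltW.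
  - by rewrite ler_sqrt; [exact: ler_wpDr (sqr_ge0 d) (lexx _) | exact: ltW].
apply: (@le_trans _ _ (k ^+ 2 / (4 * 384) * r)).
  rewrite (_ : 4 * 384 = 1536 :> R); last by ring.
  by rewrite ler_wpM2l ?divr_ge0 ?sqr_ge0.
have kC : k <= 2 * 384 by have := k_le1; lra.
have kA : k * r ^+ 2 <= A by rewrite r_sqr; have := ler_piMl (sqr_ge0 d) k_le1; lra.
have BC : B <= 384 * r ^+ 4 by rewrite -[4%N]/(2 * 2)%N exprM r_sqr.
exact: first_moment_lb k_gt0 kC r_gt0 kA BC holder.
Qed.

Lemma expect_abs_sum_ge (g : S -> R) c :
  (forall s, `|g s| <= 1) ->
  (forall i, k <= \sum_s q i s * (g s - \sum_s' q i s' * g s') ^+ 2) -> (0 < N)%N ->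
  k ^+ 2 / 1536 * Num.sqrt N%:R <= expect q (fun f => `|\sum_i g (f i) - c|).
Proof.
move=> g_bound var_lb N_gt0.
pose m i := \sum_s q i s * g s.
have m_bound i : `|m i| <= 1.
  apply: le_trans (ler_norm_sum _ _ _) _; rewrite -(q_sum1 i); apply: ler_sum => s _.
  by rewrite normrM ger0_norm // ler_piMr.
have -> : expect q (fun f => `|\sum_i g (f i) - c|)
          = expect q (fun f => `|centered_sum (fun i s => g s - m i) f + (\sum_i m i - c)|).
  apply: eq_expect => f; congr (Num.norm _).
  by rewrite /centered_sum sumrB; ring.
apply: expect_abs_centered_sum_ge => // [i|i s].
  by under eq_bigr do rewrite mulrBr; rewrite sumrB -mulr_suml q_sum1 mul1r subrr.
by apply: le_trans (ler_normB _ _) _; have := g_bound s; have := m_bound i; lra.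
Qed.

End AntiConcentration.

Lemma mu_star_distr (R : realType) (S : finType) (P : S -> bool -> S -> R) (alpha : R)
    (y : S -> bool -> R) :
  lp_feasible P alpha y -> (forall s, 0 <= mu_star y s) /\ \sum_s mu_star y s = 1.
Proof.
case=> y_ge0 _ _ y_sum1; split=> [s|]; first by rewrite addr_ge0.
by rewrite -y_sum1; apply: eq_bigr => s _; rewrite big_bool /= addrC.
Qed.

Lemma sum_emp_mul (R : realType) (S : finType) (N : nat) (x : {ffun 'I_N -> S})
    (xi : S -> R) :
  \sum_s emp R x s * xi s = N%:R^-1 * \sum_i xi (x i).
Proof.
have cntE s : (cnt x s)%:R = \sum_i (x i == s)%:R :> R.
  rewrite /cnt -sum1dep_card natr_sum big_mkcond /=.
  by apply: eq_bigr => i _; case: (x i == s).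
transitivity (\sum_s \sum_i (x i == s)%:R * (N%:R^-1 * xi s)).
  apply: eq_bigr => s _; rewrite /emp cntE !mulr_suml.
  by apply: eq_bigr => i _; ring.
by rewrite exchange_big mulr_sumr; apply: eq_bigr => i _; rewrite sumr_delta.
Qed.

Lemma cond_exp_abs_noiseE (R : realType) (S : finType) (P : S -> bool -> S -> R)
    (y : S -> bool -> R) (alpha : R) (st : S) (N : nat) (x : {ffun 'I_N -> S})
    (a : {ffun 'I_N -> bool}) (xi : S -> R) :
  (0 < N)%N -> \sum_s mu_star y s * xi s = 0 ->
  exists c, cond_exp_abs_noise P y alpha st x a xi
    = N%:R^-1 * expect (fun i s => P (x i) (a i) s) (fun f => `|\sum_i xi (f i) - c|).
Proof.
move=> N_gt0 xi_orth.
pose drift := \sum_s' (\sum_s (emp R x s - mu_star y s) * Phi P y alpha st s s') * xi s'.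
exists (N%:R * drift); rewrite -expectZ; apply: eq_bigr => nxt _; congr (_ * _).
rewrite -[N%:R^-1]ger0_norm ?invr_ge0 // -normrM mulrBr mulrA mulVf ?pnatr_eq0 -?lt0n //.
rewrite mul1r /noise_term -/drift; congr (`|_ - _|).
by under eq_bigr do rewrite mulrBl; rewrite sumrB xi_orth subr0 sum_emp_mul.
Qed.

Theorem mainTheorem13 (R : realType) (S : finType)
    (P : S -> bool -> S -> R) (r : S -> bool -> R) (alpha : R)
    (y : S -> bool -> R) (st : S) :
  is_stochastic P ->
  0 < alpha < 1 ->
  lp_optimal P r alpha y ->
  assumption2 y st ->
  (forall s a s', 0 < P s a s') ->
  exists eta' : R, exists Knoise : R, 0 < eta' /\ 0 < Knoise /\
  exists N0 : nat, forall N : nat, (N0 <= N)%N ->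
  forall x : {ffun 'I_N -> S},
    l1dist (emp R x) (mu_star y) <= eta' ->
    olc_defined y alpha st x ->
  forall xi : S -> R,
    Num.sqrt (\sum_(s : S) xi s ^+ 2) = 1 ->
    \sum_(s : S) mu_star y s * xi s = 0 ->
  forall a : {ffun 'I_N -> bool},
    olc_action y alpha x a ->
    Knoise / Num.sqrt N%:R <= cond_exp_abs_noise P y alpha st x a xi.
Proof.
move=> P_stoch _ [/mu_star_distr[mu_ge0 mu_sum1] _] _ P_gt0.
have [p [p_gt0 p_le1 p_le]] :=
  pos_fun_lb (fun t : S * bool * S => P_gt0 t.1.1 t.1.2 t.2).
pose k := p / (2 * (#|S|%:R + 1)).
have k_gt0 : 0 < k by rewrite divr_gt0 ?mulr_gt0 ?ltr_pwDr.
have k_le1 : k <= 1.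
  by rewrite ler_pdivrMr ?mulr_gt0 ?ltr_pwDr //; have := ler0n R #|S|; lra.
exists 1, (k ^+ 2 / 1536); do 2!split=> //; first by rewrite divr_gt0 ?exprn_gt0.
exists 1%N => N N_gt0 x _ _ xi xi_unit xi_orth a _.
have xi_sqr : \sum_s xi s ^+ 2 = 1.
  by rewrite -[LHS]sqr_sqrtr ?xi_unit ?expr1n // sumr_ge0 // => s _; rewrite sqr_ge0.
have var_lb i : k <= \sum_s P (x i) (a i) s * (xi s - \sum_s' P (x i) (a i) s' * xi s') ^+ 2.
  exact: weighted_sum_sqr_subr_ge mu_ge0 mu_sum1 xi_orth xi_sqr (ltW p_gt0)
           (fun s => p_le (x i, a i, s)).
have [c ->] := cond_exp_abs_noiseE P alpha st x a N_gt0 xi_orth.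
have := expect_abs_sum_ge (fun i s => ltW (P_gt0 (x i) (a i) s))
  (fun i => (P_stoch (x i) (a i)).2) k_gt0 k_le1 c (unit_coord_le1 xi_sqr) var_lb N_gt0.
by rewrite divr_sqrt ?ltr0n //; apply: ler_wpM2l; rewrite invr_ge0 ler0n.
Qed.
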